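(* Let $p\in\mathbb{N}$ and let $a,b,\alpha,\beta$ be positive real numbers such that $\alpha+\beta t>1$ for all $t\in(0,\infty)$. Define \[ \Omega(t)=\frac{p^{b\beta t}e^{a\beta\gamma t}\,\Gamma(\alpha+\beta t)^a}{\Gamma_p(\alpha+\beta t)^b},\qquad t\in(0,\infty). \] Then $\Omega$ is increasing on $(0,\infty)$, and for every $t\in(0,1)$, \[ \frac{p^{-b\beta t}e^{-a\beta\gamma t}\,\Gamma(\alpha)^a}{\Gamma_p(\alpha)^b} <\frac{\Gamma(\alpha+\beta t)^a}{\Gamma_p(\alpha+\beta t)^b} <\frac{p^{b\beta(1-t)}e^{a\beta\gamma(1-t)}\,\Gamma(\alpha+\beta)^a}{\Gamma_p(\alpha+\beta)^b}. \]
   Context: $\Gamma$ is Euler's Gamma function and $\gamma$ is the Euler–Mascheroni constant. For $p\in\mathbb{N}$ and $t>0$, the $p$-Gamma function is $\Gamma_p(t)=\frac{p!\,p^t}{t(t+1)\cdots(t+p)}$. *)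

From Stdlib Require Import Reals Factorial.
From Coquelicot Require Import Coquelicot.
Open Scope R_scope.

Definition Gamma (t : R) : R :=
  RInt_gen (fun x => Rpower x (t - 1) * exp (- x))
           (at_right 0) (Rbar_locally p_infty).

Definition euler_gamma : R :=
  real (Lim_seq (fun n => sum_f_R0 (fun k => / INR (S k)) n - ln (INR (S n)))).

Fixpoint rising_prod (t : R) (p : nat) : R :=
  match p with
  | O => t
  | S q => rising_prod t q * (t + INR (S q))
  end.

Definition Gamma_p (p : nat) (t : R) : R :=
  INR (Factorial.fact p) * Rpower (INR p) t / rising_prod t p.

Definition Omega (p : nat) (a b alpha beta : R) (t : R) : R :=
  Rpower (INR p) (b * beta * t) * exp (a * beta * euler_gamma * t)
  * Rpower (Gamma (alpha + beta * t)) a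
  / Rpower (Gamma_p p (alpha + beta * t)) b.

(* Taking logarithms, [Omega t = exp (F (alpha + beta t) - c)] with
   [F x = a (ln Gamma x + gamma x) + b ln (x (x+1) ... (x+p))], and the two
   inequalities are [Omega 0 < Omega t < Omega 1] in disguise.  The second
   summand of [F] is increasing; so is [ln Gamma x + gamma x] for [x >= 1]:
   log-convexity of Gamma (Hölder's inequality for Euler's integral) together
   with [Gamma (x+1) = x Gamma x] gives
   [ln Gamma y - ln Gamma x >= (y - x) (ln (m+1) - H_(m+1))] for every [m],
   and the right-hand side tends to [-(y - x) gamma]. *)

From Stdlib Require Import Reals Lra Lia Factorial.
From Coquelicot Require Import Coquelicot.
Open Scope R_scope.

Lemma ln_le_sub_1 (y : R) : 0 < y -> ln y <= y - 1.
Proof.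
  intros Hy. pose proof (exp_ineq1_le (ln y)) as H. rewrite exp_ln in H; lra.
Qed.

Lemma exp_le_exp (x y : R) : x <= y -> exp x <= exp y.
Proof. intros [H|H]; [left; apply exp_increasing, H | subst; right; reflexivity]. Qed.

Lemma exp_convex (l u v : R) :
  0 <= l <= 1 -> exp (l * u + (1 - l) * v) <= l * exp u + (1 - l) * exp v.
Proof.
  intros Hl. set (m := l * u + (1 - l) * v).
  assert (Htangent : forall w, exp m * (1 + (w - m)) <= exp w).
  { intros w. replace w with (m + (w - m)) at 2 by ring. rewrite exp_plus.
    apply Rmult_le_compat_l; [left; apply exp_pos | apply exp_ineq1_le]. }
  pose proof (Htangent u) as Hu. pose proof (Htangent v) as Hv.
  replace (exp m) with (l * (exp m * (1 + (u - m))) + (1 - l) * (exp m * (1 + (v - m))))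
    by (unfold m; ring).
  nra.
Qed.

Lemma ln_succ_sub_bounds (m : R) : 0 < m -> / (m + 1) <= ln (m + 1) - ln m <= / m.
Proof.
  intros Hm. rewrite <- ln_div by lra. split.
  - assert (Hln : ln (m / (m + 1)) <= m / (m + 1) - 1)
      by (apply ln_le_sub_1, Rdiv_lt_0_compat; lra).
    rewrite ln_div in Hln by lra. rewrite ln_div by lra.
    replace (m / (m + 1) - 1) with (- / (m + 1)) in Hln by (field; lra). lra.
  - replace (/ m) with ((m + 1) / m - 1) by (field; lra).
    apply ln_le_sub_1, Rdiv_lt_0_compat; lra.
Qed.

(** * The Euler–Mascheroni constant *)

Definition euler_seq (n : nat) : R :=
  sum_f_R0 (fun k => / INR (S k)) n - ln (INR (S n)).

Lemma INR_S_pos (n : nat) : 0 < INR (S n).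
Proof. apply lt_0_INR; lia. Qed.

Lemma euler_seq_decr (n : nat) : euler_seq (S n) <= euler_seq n.
Proof.
  unfold euler_seq. rewrite tech5, (S_INR (S n)).
  pose proof (ln_succ_sub_bounds (INR (S n)) (INR_S_pos n)). lra.
Qed.

Lemma ln_le_harmonic (n : nat) : ln (INR (S (S n))) <= sum_f_R0 (fun k => / INR (S k)) n.
Proof.
  induction n as [|n IH].
  - pose proof (ln_succ_sub_bounds 1 Rlt_0_1) as Hb. simpl. rewrite ln_1 in Hb. lra.
  - rewrite tech5, (S_INR (S (S n))).
    pose proof (ln_succ_sub_bounds (INR (S (S n))) (INR_S_pos (S n))). lra.
Qed.

Lemma euler_seq_ge0 (n : nat) : 0 <= euler_seq n.
Proof.
  unfold euler_seq. pose proof (ln_le_harmonic n).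
  assert (ln (INR (S n)) <= ln (INR (S (S n)))).
  { apply Rlt_le, ln_increasing; [apply INR_S_pos | rewrite (S_INR (S n)); lra]. }
  lra.
Qed.

Lemma is_lim_seq_euler_gamma : is_lim_seq euler_seq euler_gamma.
Proof.
  destruct (ex_finite_lim_seq_decr euler_seq 0 euler_seq_decr euler_seq_ge0) as [l Hl].
  unfold euler_gamma. fold euler_seq. rewrite (is_lim_seq_unique _ _ Hl). exact Hl.
Qed.

(** * Euler's integral *)

Definition gamma_kernel (s t : R) : R := Rpower t s * exp (- t).

Lemma gamma_kernel_exp (s t : R) : gamma_kernel s t = exp (s * ln t - t).
Proof. unfold gamma_kernel, Rpower, Rminus. rewrite exp_plus. reflexivity. Qed.

Lemma gamma_kernel_pos (s t : R) : 0 < gamma_kernel s t.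
Proof. rewrite gamma_kernel_exp. apply exp_pos. Qed.

Lemma gamma_kernel_le_1 (s t : R) : 0 <= s -> 0 < t <= 1 -> gamma_kernel s t <= 1.
Proof.
  intros Hs Ht. rewrite gamma_kernel_exp, <- exp_0.
  assert (ln t <= 0) by (rewrite <- ln_1; apply ln_le; lra).
  apply exp_le_exp. nra.
Qed.

Lemma gamma_kernel_le_id (s t : R) : 1 <= s -> 0 < t <= 1 -> gamma_kernel s t <= t.
Proof.
  intros Hs Ht. rewrite gamma_kernel_exp.
  assert (ln t <= 0) by (rewrite <- ln_1; apply ln_le; lra).
  apply Rle_trans with (exp (ln t)); [apply exp_le_exp; nra | rewrite exp_ln; lra].
Qed.

(* [t^(s+2) e^-t] is maximal at [t = s + 2]. *)
Lemma gamma_kernel_le_inv_sq (s : R) :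
  0 <= s -> exists C, 0 < C /\ forall t, 0 < t -> gamma_kernel s t <= C / (t * t).
Proof.
  intros Hs. exists (exp ((s + 2) * (ln (s + 2) - 1))). split; [apply exp_pos|].
  intros t Ht. apply Rmult_le_reg_r with (t * t); [nra|].
  unfold Rdiv. rewrite Rmult_assoc, Rinv_l, Rmult_1_r by nra.
  replace (t * t) with (exp (ln t) * exp (ln t)) by (rewrite exp_ln; lra).
  rewrite gamma_kernel_exp, <- !exp_plus. apply exp_le_exp.
  assert (Hln : ln (t / (s + 2)) <= t / (s + 2) - 1) by (apply ln_le_sub_1, Rdiv_lt_0_compat; lra).
  rewrite ln_div in Hln by lra.
  apply Rmult_le_compat_l with (r := s + 2) in Hln; [|lra].
  replace ((s + 2) * (t / (s + 2) - 1)) with (t - (s + 2)) in Hln by (field; lra).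
  nra.
Qed.

Lemma is_derive_gamma_kernel (s t : R) :
  0 < t -> is_derive (gamma_kernel s) t (s * gamma_kernel (s - 1) t - gamma_kernel s t).
Proof.
  intros Ht. unfold gamma_kernel, Rpower. auto_derive; [lra|].
  replace (s * ln t) with ((s - 1) * ln t + ln t) by ring.
  rewrite exp_plus, exp_ln by lra. field. lra.
Qed.

Lemma continuous_gamma_kernel (s t : R) : 0 < t -> continuous (gamma_kernel s) t.
Proof.
  intros Ht. apply (@ex_derive_continuous R_AbsRing R_NormedModule).
  eexists. apply is_derive_gamma_kernel, Ht.
Qed.

Lemma ex_RInt_gamma_kernel (s a b : R) : 0 < a -> 0 < b -> ex_RInt (gamma_kernel s) a b.
Proof.
  intros Ha Hb. apply (@ex_RInt_continuous R_CompleteNormedModule).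
  intros z Hz. apply continuous_gamma_kernel.
  assert (0 < Rmin a b) by (apply Rmin_glb_lt; lra). lra.
Qed.

Local Notation at_0_infty := (filter_prod (at_right 0) (Rbar_locally p_infty)).

Lemma at_0_infty_eventually (d M : R) :
  0 < d -> at_0_infty (fun ab => 0 < fst ab < d /\ M < snd ab).
Proof.
  intros Hd. apply (Filter_prod _ _ _ (fun a => 0 < a < d) (fun b => M < b)).
  - exists (mkposreal d Hd). intros y Hy Hy0.
    change (Rabs (y - 0) < d) in Hy. rewrite Rminus_0_r in Hy.
    apply Rabs_lt_between in Hy. lra.
  - exists M. auto.
  - intros a b Ha Hb. split; assumption.
Qed.

Lemma filterlim_RInt_of_is_RInt_gen {Fa Fb : (R -> Prop) -> Prop}
  {FFa : Filter Fa} {FFb : Filter Fb} (f : R -> R) (l : R) :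
  is_RInt_gen f Fa Fb l ->
  filterlim (fun ab => RInt f (fst ab) (snd ab)) (filter_prod Fa Fb) (locally l).
Proof.
  intros Hl P HP. specialize (Hl P HP). unfold filtermapi in Hl. unfold filtermap.
  revert Hl. apply filter_imp.
  intros ab [y [Hy HPy]]. simpl. rewrite (is_RInt_unique _ _ _ _ Hy). exact HPy.
Qed.

Lemma RInt_gamma_kernel_near_0 (s a d : R) :
  0 <= s -> 0 < a <= d -> d <= 1 -> 0 <= RInt (gamma_kernel s) a d <= d - a.
Proof.
  intros Hs Had Hd1. split.
  - apply RInt_ge_0; [lra | apply ex_RInt_gamma_kernel; lra |].
    intros t _. apply Rlt_le, gamma_kernel_pos.
  - replace (d - a) with (RInt (fun _ => 1) a d)
      by (rewrite RInt_const; change ((d - a) * 1 = d - a); ring).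
    apply RInt_le; [lra | apply ex_RInt_gamma_kernel; lra | apply ex_RInt_const |].
    intros t Ht. apply gamma_kernel_le_1; lra.
Qed.

Lemma RInt_gamma_kernel_tail (s : R) :
  0 <= s -> exists C, 0 < C /\
    forall M b, 0 < M <= b -> 0 <= RInt (gamma_kernel s) M b <= C / M.
Proof.
  intros Hs. destruct (gamma_kernel_le_inv_sq s Hs) as [C [HC Hbound]].
  exists C. split; [exact HC|]. intros M b HMb. split.
  - apply RInt_ge_0; [lra | apply ex_RInt_gamma_kernel; lra |].
    intros t _. apply Rlt_le, gamma_kernel_pos.
  - assert (Hprim : is_RInt (fun t => C / (t * t)) M b (C / M - C / b)).
    { replace (C / M - C / b) with (minus ((fun t => - C / t) b) ((fun t => - C / t) M))
        by (unfold minus, plus, opp; simpl; field; lra).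
      apply (@is_RInt_derive R_CompleteNormedModule).
      - intros t Ht. rewrite Rmin_left, Rmax_right in Ht by lra.
        auto_derive; [lra | field; lra].
      - intros t Ht. rewrite Rmin_left, Rmax_right in Ht by lra.
        apply (@ex_derive_continuous R_AbsRing R_NormedModule). auto_derive. nra. }
    apply Rle_trans with (C / M - C / b).
    + rewrite <- (is_RInt_unique _ _ _ _ Hprim).
      apply RInt_le; [lra | apply ex_RInt_gamma_kernel; lra | eexists; exact Hprim |].
      intros t Ht. apply Hbound. lra.
    + assert (0 < C / b) by (apply Rdiv_lt_0_compat; lra). lra.
Qed.

Lemma ex_RInt_gen_gamma_kernel (s : R) :
  0 <= s -> ex_RInt_gen (gamma_kernel s) (at_right 0) (Rbar_locally p_infty).
Proof.
  intros Hs. destruct (RInt_gamma_kernel_tail s Hs) as [C [HC Htail]].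
  assert (Hcauchy : exists l, filterlim (fun ab => RInt (gamma_kernel s) (fst ab) (snd ab))
                                at_0_infty (locally l)).
  { apply (filterlim_locally_cauchy (F := at_0_infty)). intros eps.
    pose proof (cond_pos eps) as He.
    set (d := Rmin 1 (eps / 4)). set (M := Rmax 1 (4 * C / eps)).
    assert (Hd : 0 < d <= 1 /\ d <= eps / 4)
      by (unfold d; split; [split; [apply Rmin_glb_lt|apply Rmin_l]|apply Rmin_r]; lra).
    assert (HM : 1 <= M /\ C / M <= eps / 4).
    { split; [apply Rmax_l|].
      apply Rle_div_l; [unfold M; pose proof (Rmax_l 1 (4 * C / eps)); lra|].
      replace C with (eps / 4 * (4 * C / eps)) at 1 by (field; lra).
      apply Rmult_le_compat_l; [lra | apply Rmax_r]. }
    assert (Hnear : forall a b, 0 < a < d -> M < b ->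
      Rabs (RInt (gamma_kernel s) a b - RInt (gamma_kernel s) d M) < eps / 2).
    { intros a b Ha Hb.
      rewrite <- (RInt_Chasles (gamma_kernel s) a d b), <- (RInt_Chasles (gamma_kernel s) d M b)
        by (apply ex_RInt_gamma_kernel; lra).
      do 2 change (plus ?x ?y) with (x + y).
      pose proof (RInt_gamma_kernel_near_0 s a d Hs ltac:(lra) ltac:(lra)).
      pose proof (Htail M b ltac:(lra)).
      apply Rabs_lt_between. split; lra. }
    exists (fun ab => 0 < fst ab < d /\ M < snd ab).
    split; [apply at_0_infty_eventually; lra|].
    intros [a b] [a' b'] [Ha Hb] [Ha' Hb']. simpl in *.
    change (Rabs (RInt (gamma_kernel s) a' b' - RInt (gamma_kernel s) a b) < eps).
    pose proof (Hnear a b Ha Hb) as Hab. pose proof (Hnear a' b' Ha' Hb') as Hab'.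
    apply Rabs_lt_between in Hab. apply Rabs_lt_between in Hab'.
    apply Rabs_lt_between. split; lra. }
  destruct Hcauchy as [l Hl]. exists l.
  apply filterlimi_lim_ext_loc with (fun ab => RInt (gamma_kernel s) (fst ab) (snd ab));
    [|exact Hl].
  generalize (at_0_infty_eventually 1 0 Rlt_0_1). apply filter_imp.
  intros [a b] [Ha Hb]. simpl in *.
  apply (@RInt_correct R_CompleteNormedModule), ex_RInt_gamma_kernel; lra.
Qed.

Lemma is_RInt_gen_Gamma (x : R) :
  1 <= x -> is_RInt_gen (gamma_kernel (x - 1)) (at_right 0) (Rbar_locally p_infty) (Gamma x).
Proof.
  intros Hx. apply (@RInt_gen_correct R_CompleteNormedModule); [exact _ | exact _ |].
  apply ex_RInt_gen_gamma_kernel. lra.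
Qed.

Lemma RInt_le_is_RInt_gen (f : R -> R) (c e l : R) :
  (forall t, 0 < t -> 0 <= f t) -> (forall a b, 0 < a -> 0 < b -> ex_RInt f a b) ->
  0 < c <= e -> is_RInt_gen f (at_right 0) (Rbar_locally p_infty) l -> RInt f c e <= l.
Proof.
  intros Hf Hex Hce Hl.
  apply (filterlim_le (F := at_0_infty) (fun _ => RInt f c e)
           (fun ab => RInt f (fst ab) (snd ab)) (Finite (RInt f c e)) (Finite l)).
  - generalize (at_0_infty_eventually c e (proj1 Hce)). apply filter_imp.
    intros [a b] [Ha Hb]. simpl in *.
    rewrite <- (RInt_Chasles f a c b), <- (RInt_Chasles f c e b) by (apply Hex; lra).
    do 2 change (plus ?x ?y) with (x + y).
    assert (0 <= RInt f a c) by (apply RInt_ge_0; [lra | apply Hex; lra | intros; apply Hf; lra]).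
    assert (0 <= RInt f e b) by (apply RInt_ge_0; [lra | apply Hex; lra | intros; apply Hf; lra]).
    lra.
  - apply filterlim_const.
  - apply filterlim_RInt_of_is_RInt_gen, Hl.
Qed.

Lemma Gamma_pos (x : R) : 1 <= x -> 0 < Gamma x.
Proof.
  intros Hx. apply Rlt_le_trans with (RInt (gamma_kernel (x - 1)) 1 2).
  - apply RInt_gt_0; [lra | intros; apply gamma_kernel_pos |].
    intros t Ht. apply continuous_gamma_kernel. lra.
  - apply RInt_le_is_RInt_gen; [intros; apply Rlt_le, gamma_kernel_pos
                              | intros; apply ex_RInt_gamma_kernel; lra | lra
                              | apply is_RInt_gen_Gamma, Hx].
Qed.

Lemma filterlim_gamma_kernel_at_0 (s : R) :
  1 <= s -> filterlim (gamma_kernel s) (at_right 0) (locally 0).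
Proof.
  intros Hs. apply filterlim_locally. intros eps. pose proof (cond_pos eps).
  assert (Hd : 0 < Rmin 1 eps) by (apply Rmin_glb_lt; lra).
  exists (mkposreal _ Hd). intros t Ht Ht0.
  change (Rabs (t - 0) < Rmin 1 eps) in Ht. change (Rabs (gamma_kernel s t - 0) < eps).
  rewrite Rminus_0_r, Rabs_right in Ht by lra.
  pose proof (Rmin_l 1 eps). pose proof (Rmin_r 1 eps).
  pose proof (gamma_kernel_le_id s t Hs ltac:(lra)). pose proof (gamma_kernel_pos s t).
  rewrite Rminus_0_r, Rabs_right by lra. lra.
Qed.

Lemma filterlim_gamma_kernel_at_infty (s : R) :
  0 <= s -> filterlim (gamma_kernel s) (Rbar_locally p_infty) (locally 0).
Proof.
  intros Hs. destruct (gamma_kernel_le_inv_sq s Hs) as [C [HC Hbound]].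
  apply filterlim_locally. intros eps. pose proof (cond_pos eps).
  exists (Rmax 1 (C / eps)). intros t Ht.
  pose proof (Rmax_l 1 (C / eps)). pose proof (Rmax_r 1 (C / eps)).
  assert (HCt : C < t * eps) by (apply Rlt_div_l; lra).
  assert (C / (t * t) < eps) by (apply Rlt_div_l; nra).
  pose proof (Hbound t ltac:(lra)). pose proof (gamma_kernel_pos s t).
  change (Rabs (gamma_kernel s t - 0) < eps). rewrite Rminus_0_r, Rabs_right by lra. lra.
Qed.

(* Integration by parts: [t^x e^-t] vanishes at both ends. *)
Lemma is_RInt_gen_Derive_gamma_kernel (x : R) :
  1 <= x -> is_RInt_gen (fun t => x * gamma_kernel (x - 1) t - gamma_kernel x t)
              (at_right 0) (Rbar_locally p_infty) 0.
Proof.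
  intros Hx.
  assert (Hpos : at_0_infty (fun ab => forall t, Rmin (fst ab) (snd ab) <= t -> 0 < t)).
  { generalize (at_0_infty_eventually 1 0 Rlt_0_1). apply filter_imp.
    intros [a b] [Ha Hb] t Ht. simpl in *.
    assert (0 < Rmin a b) by (apply Rmin_glb_lt; lra). lra. }
  apply (is_RInt_gen_ext (Derive (gamma_kernel x))).
  { revert Hpos. apply filter_imp. intros ab Hpos t Ht.
    apply is_derive_unique, is_derive_gamma_kernel, Hpos. lra. }
  rewrite <- (Rminus_0_r 0) at 2. apply is_RInt_gen_Derive.
  - revert Hpos. apply filter_imp. intros ab Hpos t Ht.
    eexists. apply is_derive_gamma_kernel, Hpos. lra.
  - revert Hpos. apply filter_imp. intros ab Hpos t Ht.
    assert (Ht0 : 0 < t) by (apply Hpos; lra).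
    apply continuous_ext_loc with (fun u => x * gamma_kernel (x - 1) u - gamma_kernel x u).
    + generalize (open_gt 0 t Ht0). apply filter_imp. intros u Hu.
      symmetry. apply is_derive_unique, is_derive_gamma_kernel, Hu.
    + apply (@ex_derive_continuous R_AbsRing R_NormedModule).
      unfold gamma_kernel, Rpower. auto_derive. lra.
  - apply filterlim_gamma_kernel_at_0, Hx.
  - apply filterlim_gamma_kernel_at_infty. lra.
Qed.

Lemma Gamma_succ (x : R) : 1 <= x -> Gamma (x + 1) = x * Gamma x.
Proof.
  intros Hx. unfold Gamma at 1. replace (x + 1 - 1) with x by ring.
  apply (@is_RInt_gen_unique R_CompleteNormedModule); [exact _ | exact _ |].
  set (G := Gamma x).
  replace (x * G) with (minus (scal x G) 0) by (change (x * G - 0 = x * G); ring).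
  apply (is_RInt_gen_ext (fun t => minus (scal x (gamma_kernel (x - 1) t))
                                         (x * gamma_kernel (x - 1) t - gamma_kernel x t))).
  - apply filter_forall. intros ab t _.
    change (x * gamma_kernel (x - 1) t - (x * gamma_kernel (x - 1) t - gamma_kernel x t)
      = Rpower t x * exp (- t)).
    unfold gamma_kernel. ring.
  - exact (is_RInt_gen_minus _ _ _ _ (is_RInt_gen_scal _ x _ (is_RInt_gen_Gamma x Hx))
                              (is_RInt_gen_Derive_gamma_kernel x Hx)).
Qed.

(** * Log-convexity and growth of [ln Gamma] *)

(* Hölder's inequality for Euler's integral, via weighted AM-GM on the normalised kernels. *)
Lemma ln_Gamma_convex (x y l : R) :
  1 <= x -> 1 <= y -> 0 < l < 1 ->
  ln (Gamma (l * x + (1 - l) * y)) <= l * ln (Gamma x) + (1 - l) * ln (Gamma y).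
Proof.
  intros Hx Hy Hl. set (z := l * x + (1 - l) * y).
  assert (Hz : 1 <= z) by (unfold z; nra).
  set (A := Gamma x). set (B := Gamma y).
  assert (HA : 0 < A) by apply (Gamma_pos x Hx). assert (HB : 0 < B) by apply (Gamma_pos y Hy).
  set (K := exp (l * ln A + (1 - l) * ln B)).
  set (g := fun t => scal K (plus (scal (l / A) (gamma_kernel (x - 1) t))
                                  (scal ((1 - l) / B) (gamma_kernel (y - 1) t)))).
  assert (Hpt : forall t, 0 < t -> gamma_kernel (z - 1) t <= g t).
  { intros t Ht. set (u := gamma_kernel (x - 1) t / A). set (v := gamma_kernel (y - 1) t / B).
    assert (Hu : 0 < u) by (apply Rdiv_lt_0_compat; [apply gamma_kernel_pos | exact HA]).
    assert (Hv : 0 < v) by (apply Rdiv_lt_0_compat; [apply gamma_kernel_pos | exact HB]).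
    assert (E : gamma_kernel (z - 1) t = K * exp (l * ln u + (1 - l) * ln v)).
    { unfold K, u, v. rewrite <- exp_plus, !ln_div, !gamma_kernel_exp, !ln_exp
        by (first [exact HA | exact HB | apply gamma_kernel_pos]).
      f_equal. unfold z. ring. }
    change (gamma_kernel (z - 1) t <= K * (l / A * gamma_kernel (x - 1) t
                                           + (1 - l) / B * gamma_kernel (y - 1) t)).
    rewrite E. apply Rmult_le_compat_l; [left; apply exp_pos|].
    replace (l / A * gamma_kernel (x - 1) t + (1 - l) / B * gamma_kernel (y - 1) t)
      with (l * exp (ln u) + (1 - l) * exp (ln v))
      by (rewrite !exp_ln by assumption; unfold u, v; field; lra).
    apply exp_convex. lra. }
  assert (Hg : is_RInt_gen g (at_right 0) (Rbar_locally p_infty)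
                 (scal K (plus (scal (l / A) A) (scal ((1 - l) / B) B)))).
  { exact (is_RInt_gen_scal _ K _ (is_RInt_gen_plus _ _ _ _
             (is_RInt_gen_scal _ (l / A) _ (is_RInt_gen_Gamma x Hx))
             (is_RInt_gen_scal _ ((1 - l) / B) _ (is_RInt_gen_Gamma y Hy)))). }
  assert (HK : scal K (plus (scal (l / A) A) (scal ((1 - l) / B) B)) = K).
  { change (K * (l / A * A + (1 - l) / B * B) = K). field. lra. }
  rewrite HK in Hg.
  assert (HGz : Gamma z <= K).
  { apply Rle_trans with (Rabs (Gamma z)); [apply Rle_abs|].
    apply (@RInt_gen_norm R_CompleteNormedModule (at_right 0) (Rbar_locally p_infty) _ _
             (gamma_kernel (z - 1)) g (Gamma z) K).
    - generalize (at_0_infty_eventually 1 1 Rlt_0_1). apply filter_imp.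
      intros [a b] [Ha Hb]. simpl in *. lra.
    - generalize (at_0_infty_eventually 1 1 Rlt_0_1). apply filter_imp.
      intros [a b] [Ha Hb] t Ht. simpl in *.
      pose proof (gamma_kernel_pos (z - 1) t).
      change (Rabs (gamma_kernel (z - 1) t) <= g t). rewrite Rabs_right by lra. apply Hpt. lra.
    - apply is_RInt_gen_Gamma, Hz.
    - exact Hg. }
  unfold K in HGz. rewrite <- (ln_exp (l * ln A + (1 - l) * ln B)).
  apply ln_le; [apply Gamma_pos, Hz | exact HGz].
Qed.

Lemma ln_Gamma_succ (x : R) : 1 <= x -> ln (Gamma (x + 1)) = ln (Gamma x) + ln x.
Proof. intros Hx. rewrite Gamma_succ, ln_mult by (try apply Gamma_pos; lra). ring. Qed.

Lemma ln_Gamma_shift (x : R) (m : nat) :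
  1 <= x -> ln (Gamma (x + INR (S m))) = ln (Gamma x) + sum_f_R0 (fun k => ln (x + INR k)) m.
Proof.
  intros Hx. induction m as [|m IH].
  - simpl. rewrite Rplus_0_r. apply ln_Gamma_succ, Hx.
  - pose proof (pos_INR (S m)).
    rewrite tech5, (S_INR (S m)), <- Rplus_assoc, ln_Gamma_succ, IH by lra. ring.
Qed.

(* Log-convexity on [z - 1, z, w] plus [ln Gamma z - ln Gamma (z - 1) = ln (z - 1)]. *)
Lemma ln_Gamma_slope (z w : R) :
  2 <= z -> z < w -> (w - z) * ln (z - 1) <= ln (Gamma w) - ln (Gamma z).
Proof.
  intros Hz Hw. set (l := (w - z) / (w - z + 1)).
  assert (Hl : 0 < l < 1).
  { unfold l. split; [apply Rdiv_lt_0_compat; lra | apply Rlt_div_l; lra]. }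
  pose proof (ln_Gamma_convex (z - 1) w l ltac:(lra) ltac:(lra) Hl) as Hconv.
  replace (l * (z - 1) + (1 - l) * w) with z in Hconv by (unfold l; field; lra).
  pose proof (ln_Gamma_succ (z - 1) ltac:(lra)) as Hsucc.
  replace (z - 1 + 1) with z in Hsucc by ring.
  assert (Hcleared : (w - z + 1) * ln (Gamma z)
                     <= (w - z) * ln (Gamma (z - 1)) + ln (Gamma w)).
  { replace ((w - z) * ln (Gamma (z - 1)) + ln (Gamma w))
      with ((w - z + 1) * (l * ln (Gamma (z - 1)) + (1 - l) * ln (Gamma w)))
      by (unfold l; field; lra).
    apply Rmult_le_compat_l; lra. }
  rewrite Hsucc in Hcleared |- *. nra.
Qed.

Lemma sum_ln_shift_le (x y : R) (m : nat) :
  1 <= x <= y ->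
  sum_f_R0 (fun k => ln (y + INR k)) m - sum_f_R0 (fun k => ln (x + INR k)) m
  <= (y - x) * sum_f_R0 (fun k => / INR (S k)) m.
Proof.
  intros Hxy.
  assert (Hterm : forall k, ln (y + INR k) - ln (x + INR k) <= (y - x) * / INR (S k)).
  { intros k. pose proof (pos_INR k). rewrite <- ln_div by lra.
    eapply Rle_trans; [apply ln_le_sub_1, Rdiv_lt_0_compat; lra|].
    replace ((y + INR k) / (x + INR k) - 1) with ((y - x) * / (x + INR k)) by (field; lra).
    apply Rmult_le_compat_l; [lra|].
    apply Rinv_le_contravar; [apply INR_S_pos | rewrite S_INR; lra]. }
  induction m as [|m IH]; [exact (Hterm 0%nat) | rewrite !tech5; specialize (Hterm (S m)); lra].
Qed.

(* Shift far to the right, where the slope of [ln Gamma] is at least [ln (m + 1)]. *)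
Lemma ln_Gamma_increment_ge (x y : R) (m : nat) :
  1 <= x < y -> - (y - x) * euler_seq m <= ln (Gamma y) - ln (Gamma x).
Proof.
  intros Hxy. pose proof (INR_S_pos m) as Hm.
  assert (Hm1 : 1 <= INR (S m)) by (rewrite S_INR; pose proof (pos_INR m); lra).
  pose proof (ln_Gamma_slope (x + INR (S m)) (y + INR (S m)) ltac:(lra) ltac:(lra)) as Hslope.
  rewrite !ln_Gamma_shift in Hslope by lra.
  replace (y + INR (S m) - (x + INR (S m))) with (y - x) in Hslope by ring.
  assert (ln (INR (S m)) <= ln (x + INR (S m) - 1)) by (apply ln_le; lra).
  assert ((y - x) * ln (INR (S m)) <= (y - x) * ln (x + INR (S m) - 1))
    by (apply Rmult_le_compat_l; lra).
  pose proof (sum_ln_shift_le x y m ltac:(lra)).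
  unfold euler_seq. nra.
Qed.

Lemma ln_Gamma_add_euler_le (x y : R) :
  1 <= x <= y -> ln (Gamma x) + euler_gamma * x <= ln (Gamma y) + euler_gamma * y.
Proof.
  intros Hxy. destruct (Req_dec x y) as [<-|Hne]; [lra|].
  assert (Hlim : - (y - x) * euler_gamma <= ln (Gamma y) - ln (Gamma x)).
  { apply (is_lim_seq_le (fun m => - (y - x) * euler_seq m) (fun _ => ln (Gamma y) - ln (Gamma x))
             (- (y - x) * euler_gamma) (ln (Gamma y) - ln (Gamma x))).
    - intros m. apply ln_Gamma_increment_ge. lra.
    - apply (is_lim_seq_scal_l euler_seq (- (y - x)) euler_gamma), is_lim_seq_euler_gamma.
    - apply is_lim_seq_const. }
  nra.
Qed.

(** * The function [Omega] *)

Lemma rising_prod_pos (p : nat) (x : R) : 0 < x -> 0 < rising_prod x p.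
Proof.
  intros Hx. induction p as [|p IH]; cbn [rising_prod]; [exact Hx|].
  apply Rmult_lt_0_compat; [exact IH|]. pose proof (pos_INR (S p)). lra.
Qed.

Lemma rising_prod_lt (p : nat) (x y : R) : 0 < x < y -> rising_prod x p < rising_prod y p.
Proof.
  intros Hxy. induction p as [|p IH]; cbn [rising_prod]; [lra|].
  pose proof (rising_prod_pos p x ltac:(lra)). pose proof (pos_INR (S p)).
  apply Rlt_trans with (rising_prod y p * (x + INR (S p))).
  - apply Rmult_lt_compat_r; lra.
  - apply Rmult_lt_compat_l; lra.
Qed.

Definition omega_exponent (p : nat) (a b x : R) : R :=
  a * (ln (Gamma x) + euler_gamma * x) + b * ln (rising_prod x p).

Lemma omega_exponent_lt (p : nat) (a b x y : R) :
  0 < a -> 0 < b -> 1 <= x < y -> omega_exponent p a b x < omega_exponent p a b y.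
Proof.
  intros Ha Hb Hxy. unfold omega_exponent.
  pose proof (ln_Gamma_add_euler_le x y ltac:(lra)).
  assert (ln (rising_prod x p) < ln (rising_prod y p))
    by (apply ln_increasing; [apply rising_prod_pos | apply rising_prod_lt]; lra).
  nra.
Qed.

(* Holds for [p = 0] too: then [Rpower 0 x = exp (x * ln 0) = 1]. *)
Lemma Gamma_ratio_exp (p : nat) (a b x : R) :
  1 <= x ->
  Rpower (Gamma x) a / Rpower (Gamma_p p x) b
  = exp (omega_exponent p a b x - x * (a * euler_gamma + b * ln (INR p))
         - b * ln (INR (fact p))).
Proof.
  intros Hx.
  assert (Hfact : 0 < INR (fact p)) by apply (lt_0_INR _ (lt_O_fact p)).
  assert (Hrise : 0 < rising_prod x p) by (apply rising_prod_pos; lra).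
  assert (Hln : ln (Gamma_p p x) = ln (INR (fact p)) + x * ln (INR p) - ln (rising_prod x p)).
  { unfold Gamma_p.
    rewrite ln_div, ln_mult by (try apply Rmult_lt_0_compat; try apply exp_pos; assumption).
    unfold Rpower at 1. rewrite ln_exp. ring. }
  unfold Rpower at 1 2. rewrite Hln. unfold Rdiv. rewrite <- exp_Ropp, <- exp_plus.
  f_equal. unfold omega_exponent. ring.
Qed.

Lemma scaled_Gamma_ratio_exp (p : nat) (a b c d x : R) :
  1 <= x ->
  Rpower (INR p) c * exp d * Rpower (Gamma x) a / Rpower (Gamma_p p x) b
  = exp (c * ln (INR p) + d + omega_exponent p a b x
         - x * (a * euler_gamma + b * ln (INR p)) - b * ln (INR (fact p))).
Proof.
  intros Hx. unfold Rdiv. rewrite Rmult_assoc.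
  fold (Rdiv (Rpower (Gamma x) a) (Rpower (Gamma_p p x) b)).
  rewrite Gamma_ratio_exp by exact Hx. unfold Rpower at 1. rewrite <- !exp_plus. f_equal. ring.
Qed.

Lemma one_le_of_affine_gt_one (alpha beta : R) :
  0 < beta -> (forall t, 0 < t -> alpha + beta * t > 1) -> 1 <= alpha.
Proof.
  intros Hbeta Hgt. destruct (Rle_or_lt 1 alpha) as [Hle|Hlt]; [exact Hle|].
  specialize (Hgt ((1 - alpha) / beta) ltac:(apply Rdiv_lt_0_compat; lra)).
  replace (alpha + beta * ((1 - alpha) / beta)) with 1 in Hgt by (field; lra). lra.
Qed.

Theorem theorem3p7 (p : nat) (a b alpha beta : R)
  (hp : (1 <= p)%nat) (ha : 0 < a) (hb : 0 < b)
  (halpha : 0 < alpha) (hbeta : 0 < beta)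
  (hab : forall t : R, 0 < t -> alpha + beta * t > 1) :
  (forall s t : R, 0 < s -> s < t ->
     Omega p a b alpha beta s < Omega p a b alpha beta t)
  /\
  (forall t : R, 0 < t < 1 ->
     Rpower (INR p) (- (b * beta * t)) * exp (- (a * beta * euler_gamma * t))
       * Rpower (Gamma alpha) a / Rpower (Gamma_p p alpha) b
     < Rpower (Gamma (alpha + beta * t)) a / Rpower (Gamma_p p (alpha + beta * t)) b
     /\
     Rpower (Gamma (alpha + beta * t)) a / Rpower (Gamma_p p (alpha + beta * t)) b
     < Rpower (INR p) (b * beta * (1 - t)) * exp (a * beta * euler_gamma * (1 - t))
       * Rpower (Gamma (alpha + beta)) a / Rpower (Gamma_p p (alpha + beta)) b).
Proof.
  pose proof (one_le_of_affine_gt_one alpha beta hbeta hab) as Halpha.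
  pose proof (fun x y => omega_exponent_lt p a b x y ha hb) as Hmono.
  split.
  - intros s t Hs Hst. pose proof (hab s Hs). pose proof (hab t ltac:(lra)).
    unfold Omega. rewrite !scaled_Gamma_ratio_exp by lra. apply exp_increasing.
    pose proof (Hmono (alpha + beta * s) (alpha + beta * t) ltac:(nra)). nra.
  - intros t Ht. pose proof (hab t ltac:(lra)). pose proof (hab 1 ltac:(lra)).
    rewrite Gamma_ratio_exp, !scaled_Gamma_ratio_exp by lra.
    pose proof (Hmono alpha (alpha + beta * t) ltac:(nra)).
    pose proof (Hmono (alpha + beta * t) (alpha + beta) ltac:(nra)).
    split; apply exp_increasing; nra.
Qed.
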